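(* Let $\mathcal M_{int}$ be the set of triplets $(T,I,F)$ of nonempty intervals (open, half-open or closed) contained in $[0,1]$; write $T^L=\inf T$, $T^U=\sup T$, and similarly $I^L,I^U,F^L,F^U$. Define for $P=(T,I,F)\in\mathcal M_{int}$ $$s(P)=\frac{4+T^L+T^U-I^L-I^U-F^L-F^U}{6},\quad a(P)=\frac{T^L+T^U-F^L-F^U}{2},\quad c(P)=\frac{T^L+T^U}{2}.$$ Compare $P_1,P_2\in\mathcal M_{int}$ lexicographically by $(s,a,c)$: $P_1>P_2$ (resp. $P_1<P_2$) if $s(P_1)>s(P_2)$ (resp. $<$), or $s$ values are equal and $a(P_1)>a(P_2)$ (resp. $<$), or $s$ and $a$ values are equal and $c(P_1)>c(P_2)$ (resp. $<$). Then for any $P_1,P_2\in\mathcal M_{int}$, either $P_1>P_2$, or $P_1<P_2$, or $P_1$ and $P_2$ are neutrosophically equal, meaning $\frac{T_1^L+T_1^U}{2}=\frac{T_2^L+T_2^U}{2}$, $\frac{I_1^L+I_1^U}{2}=\frac{I_2^L+I_2^U}{2}$ and $\frac{F_1^L+F_1^U}{2}=\frac{F_2^L+F_2^U}{2}$ (the corresponding component intervals have the same midpoints). Thus $s,a,c$ determine a total order on $\mathcal M_{int}$ up to neutrosophic equality.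
   Context: $s,a,c$ are the paper's new interval neutrosophic score, accuracy and certainty functions; two intervals are called neutrosophically equal when they have the same midpoint. *)

From HB Require Import structures.
From mathcomp Require Import all_boot all_order all_algebra.
Set Implicit Arguments. Unset Strict Implicit. Unset Printing Implicit Defensive.
Import Order.TTheory GRing.Theory Num.Theory.
Local Open Scope ring_scope.

(* A real interval with finite endpoints lo <= hi (when nonempty) and
   closedness flags: lo_cl = true iff lo belongs to the interval (when
   nonempty), hi_cl = true iff hi belongs to it. *)
Record fitv (R : realFieldType) := MkFitv {
  lo : R; hi : R; lo_cl : bool; hi_cl : bool }.

(* The corresponding MathComp interval: closed left bound = BLeft = BSide true,
   closed right bound = BRight = BSide false. *)
Definition as_itv (R : realFieldType) (i : fitv R) : interval R :=
  Interval (BSide (lo_cl i) (lo i)) (BSide (~~ hi_cl i) (hi i)).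

Definition valid_itv (R : realFieldType) (i : fitv R) : Prop :=
  (exists x : R, x \in as_itv i) /\
  (forall x : R, x \in as_itv i -> 0 <= x <= 1).

(* For a nonempty interval, inf = lo and sup = hi. *)
Definition infI (R : realFieldType) (i : fitv R) : R := lo i.
Definition supI (R : realFieldType) (i : fitv R) : R := hi i.

Record ntrip (R : realFieldType) := MkNtrip {
  tT : fitv R; tI : fitv R; tF : fitv R }.

Definition in_Mint (R : realFieldType) (P : ntrip R) : Prop :=
  valid_itv (tT P) /\ valid_itv (tI P) /\ valid_itv (tF P).

Definition score (R : realFieldType) (P : ntrip R) : R :=
  (4 + infI (tT P) + supI (tT P) - infI (tI P) - supI (tI P)
     - infI (tF P) - supI (tF P)) / 6.
Definition accuracy (R : realFieldType) (P : ntrip R) : R :=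
  (infI (tT P) + supI (tT P) - infI (tF P) - supI (tF P)) / 2.
Definition certainty (R : realFieldType) (P : ntrip R) : R :=
  (infI (tT P) + supI (tT P)) / 2.

Definition ngt (R : realFieldType) (P1 P2 : ntrip R) : Prop :=
  score P1 > score P2 \/
  (score P1 = score P2 /\ accuracy P1 > accuracy P2) \/
  (score P1 = score P2 /\ accuracy P1 = accuracy P2 /\
   certainty P1 > certainty P2).

Definition nlt (R : realFieldType) (P1 P2 : ntrip R) : Prop :=
  score P1 < score P2 \/
  (score P1 = score P2 /\ accuracy P1 < accuracy P2) \/
  (score P1 = score P2 /\ accuracy P1 = accuracy P2 /\
   certainty P1 < certainty P2).

Definition midI (R : realFieldType) (i : fitv R) : R := (infI i + supI i) / 2.

Definition neut_eq (R : realFieldType) (P1 P2 : ntrip R) : Prop :=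
  midI (tT P1) = midI (tT P2) /\ midI (tI P1) = midI (tI P2) /\
  midI (tF P1) = midI (tF P2).

From HB Require Import structures.
From mathcomp Require Import all_boot all_order all_algebra.
From mathcomp Require Import lra.
Import Order.TTheory GRing.Theory Num.Theory.
Local Open Scope ring_scope.

(* The keys are affine in the midpoints m_T, m_I, m_F of the three components:
   c = m_T, a = m_T - m_F and s = (2 + m_T - m_I - m_F) / 3.  This system is
   triangular, so (s, a, c) determines the midpoints, and the lexicographic
   order on triples is total. *)

Lemma lex3_trichotomy {d} {T : orderType d} (x1 x2 y1 y2 z1 z2 : T) :
  [\/ (x2 < x1 \/ (x1 = x2 /\ y2 < y1) \/ x1 = x2 /\ y1 = y2 /\ z2 < z1)%O,
      (x1 < x2 \/ (x1 = x2 /\ y1 < y2) \/ x1 = x2 /\ y1 = y2 /\ z1 < z2)%O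
    | [/\ x1 = x2, y1 = y2 & z1 = z2]].
Proof.
case: (ltgtP x1 x2) => [hx|hx|->]; [by apply: Or32; left|by apply: Or31; left|].
case: (ltgtP y1 y2) => [hy|hy|->].
- by apply: Or32; right; left.
- by apply: Or31; right; left.
case: (ltgtP z1 z2) => [hz|hz|->]; last by apply: Or33.
- by apply: Or32; right; right; split.
- by apply: Or31; right; right; split.
Qed.

Section Midpoints.

Variables (R : realFieldType) (P : ntrip R).

Lemma certaintyE : certainty P = midI (tT P).
Proof. by []. Qed.

Lemma accuracyE : accuracy P = midI (tT P) - midI (tF P).
Proof. rewrite /accuracy /midI; lra. Qed.

Lemma scoreE : score P = (2 + midI (tT P) - midI (tI P) - midI (tF P)) / 3.
Proof. rewrite /score /midI; lra. Qed.

End Midpoints.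

Lemma neut_eq_keys (R : realFieldType) (P1 P2 : ntrip R) :
  score P1 = score P2 -> accuracy P1 = accuracy P2 ->
  certainty P1 = certainty P2 -> neut_eq P1 P2.
Proof.
rewrite !scoreE !accuracyE !certaintyE => hs ha hT.
have hF : midI (tF P1) = midI (tF P2) by move: ha; rewrite hT; lra.
split; [exact: hT | split; last exact: hF].
by move: hs; rewrite hT hF; lra.
Qed.

Theorem theorem10p4 (R : realFieldType) (P1 P2 : ntrip R) :
  in_Mint P1 -> in_Mint P2 ->
  ngt P1 P2 \/ nlt P1 P2 \/ neut_eq P1 P2.
Proof.
move=> _ _.
case: (lex3_trichotomy (score P1) (score P2) (accuracy P1) (accuracy P2)
                       (certainty P1) (certainty P2)) => [gt12|lt12|[hs ha hc]].
- by left.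
- by right; left.
- by right; right; apply: neut_eq_keys.
Qed.
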